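(* For $0\le L<1<R$ define $$\Phi(L,R)=\mathrm{p.v.}\int_L^R\frac{\pi\sqrt{(R^2-x^2)(x^2-L^2)}}{x^2-1}\,dx,$$ the principal value being taken at $x=1$. (i) $\Phi(L,R)$ is strictly increasing in $L$ and strictly increasing in $R$. (ii) There is a unique $R_c>1$ with $\Phi(0,R_c)=0$ (numerically $R_c\approx1.8102$). (iii) If $\Phi(L,R)=0$, then $L+R<2$ and $L^2+R^2>2$. *)

From Stdlib Require Import Reals.
From Coquelicot Require Import Coquelicot.
Open Scope R_scope.

Definition phi_integrand (a b x : R) : R :=
  PI * sqrt ((b ^ 2 - x ^ 2) * (x ^ 2 - a ^ 2)) / (x ^ 2 - 1).

Definition pv_trunc (a b eps : R) : R :=
  RInt (phi_integrand a b) a (1 - eps) + RInt (phi_integrand a b) (1 + eps) b.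

Definition pv_converges (a b l : R) : Prop :=
  filterlim (pv_trunc a b) (at_right 0) (locally l).

(* Phi(L,R) = p.v. integral (value of the limit eps -> 0+; meaningful when
   the limit exists, which is asserted as part of the theorem) *)
Definition Phi (a b : R) : R := real (Lim (pv_trunc a b) 0).

From Stdlib Require Import Reals Lra Psatz.
From Coquelicot Require Import Coquelicot.
Open Scope R_scope.

(* Since 1/(x^2 - 1) = x/(x^2 - 1) - 1/(1 + x), the integrand splits into a singular
   part x sqrt(Q)/(x^2 - 1), Q = (R^2 - x^2)(x^2 - L^2), and a regular part
   sqrt(Q)/(1 + x).  In the variable u = x^2 the singular part has an explicit primitive
   (square root, arcsine and logarithm) whose logarithmic singularities at x = 1 cancel
   in the principal value, so that
     Phi(L, R) = pi^2/4 (L^2 + R^2 - 2) - pi J(L, R),   J(L, R) = int_L^R sqrt(Q)/(1 + x) > 0.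
   J decreases in L, and increases in R by at most R/(1 + R) times the growth of the
   quarter disc of radius R, which gives (i).  On the line L + R = 2 the integrand of J
   lies below the semicircle of radius R - 1 about 1, so Phi(2 - R, R) > 0, while
   Phi < 0 when L^2 + R^2 <= 2; monotonicity then gives (iii), and the intermediate
   value theorem on [sqrt 2, 2] gives (ii). *)

(* Equalities produced by [RInt] live in a [CompleteNormedModule] carrier; [field] needs them in [R]. *)
Ltac change_eq_R := match goal with |- ?a = ?b => change (@eq R a b) end.

Lemma ex_derive_continuous_R (f : R -> R) x : ex_derive f x -> continuous f x.
Proof. apply (@ex_derive_continuous R_AbsRing R_NormedModule). Qed.

Lemma lipschitz_continuous (g : R -> R) K x : 0 < K ->
  (forall y z, Rabs (g y - g z) <= K * Rabs (y - z)) -> continuous g x.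
Proof.
intros HK Hg. apply continuity_pt_filterlim. intros e He.
exists (e / K). split; [now apply Rdiv_lt_0_compat|].
intros y [_ Hy]. simpl in *. unfold R_dist in *.
apply Rle_lt_trans with (K * Rabs (y - x)); [apply Hg|].
apply Rmult_lt_reg_l with (/ K); [now apply Rinv_0_lt_compat|].
rewrite <- Rmult_assoc, Rinv_l, Rmult_1_l by lra. lra.
Qed.

Definition clamp (p q x : R) : R := Rmax p (Rmin q x).

Lemma clamp_id p q x : p <= x <= q -> clamp p q x = x.
Proof. intros Hx. unfold clamp. rewrite Rmin_right, Rmax_right; lra. Qed.

Lemma clamp_in p q x : p <= q -> p <= clamp p q x <= q.
Proof. intros Hpq. unfold clamp, Rmax, Rmin. repeat destruct Rle_dec; lra. Qed.

Lemma clamp_lipschitz p q x y : Rabs (clamp p q x - clamp p q y) <= Rabs (x - y).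
Proof. unfold clamp, Rmax, Rmin. repeat destruct Rle_dec; split_Rabs; lra. Qed.

Lemma continuous_clamp p q x : continuous (clamp p q) x.
Proof.
apply (lipschitz_continuous _ 1); [lra|].
intros y z. rewrite Rmult_1_l. apply clamp_lipschitz.
Qed.

Lemma RInt_derive_interior (f G : R -> R) p q : p <= q ->
  (forall x, p <= x <= q -> continuous f x) ->
  (forall x, p < x < q -> is_derive G x (f x)) ->
  continuous G p -> continuous G q -> RInt f p q = G q - G p.
Proof.
intros Hpq Hf HG Gp Gq.
(* Extending [f] by constants outside [p, q] makes [s |-> RInt f p s] differentiable up to the endpoints. *)
set (fc x := f (clamp p q x)).
assert (Hfc : forall x, continuous fc x).
{ intros x. apply (continuous_comp (clamp p q) f); [apply continuous_clamp|].
  now apply Hf, clamp_in. }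
set (I s := RInt fc p s).
assert (HI : forall s, is_derive I s (fc s)).
{ intros s. apply is_derive_RInt with p; [|apply Hfc].
  apply filter_forall. intros z.
  apply (@RInt_correct R_CompleteNormedModule), ex_RInt_continuous.
  intros; apply Hfc. }
assert (Hfc_in : forall x, p <= x <= q -> fc x = f x).
{ intros x Hx. unfold fc. now rewrite clamp_id. }
assert (HG_cont : forall x, p <= x <= q -> continuous G x).
{ intros x Hx. destruct (Req_dec x p) as [->|Hxp]; [exact Gp|].
  destruct (Req_dec x q) as [->|Hxq]; [exact Gq|].
  apply ex_derive_continuous_R. exists (f x). apply HG. lra. }
destruct (MVT_gen (fun s => I s - G s) p q (fun _ => 0)) as [c [_ Hc]].
- rewrite Rmin_left, Rmax_right by lra. intros x Hx.
  replace 0 with (fc x - f x) by (rewrite Hfc_in; lra).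
  apply (is_derive_minus I G); [apply HI | apply HG; lra].
- rewrite Rmin_left, Rmax_right by lra. intros x Hx.
  apply continuity_pt_filterlim, (continuous_minus I G).
  + apply ex_derive_continuous_R. exists (fc x). apply HI.
  + now apply HG_cont.
- assert (E : RInt f p q = I q).
  { apply RInt_ext. rewrite Rmin_left, Rmax_right by lra. intros x Hx.
    symmetry. apply Hfc_in. lra. }
  unfold I in E, Hc. rewrite RInt_point in Hc. change zero with 0 in Hc. lra.
Qed.

(* Coquelicot's [Lim f x] samples [f] along [x + 1/(n+1)], so a right limit determines it. *)
Lemma Lim_at_right (f : R -> R) x l :
  filterlim f (at_right x) (locally l) -> real (Lim f x) = l.
Proof.
intros H. unfold Lim. rewrite (is_lim_seq_unique _ l); [reflexivity|].
apply (filterlim_comp _ _ _ (Rbar_loc_seq x) f eventually (at_right x)); [|exact H].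
intros P [d Hd].
destruct (is_lim_seq_Rbar_loc_seq x (ball x d) (locally_ball x d)) as [N HN].
exists N. intros n Hn. apply Hd; [now apply HN|].
simpl. pose proof (pos_INR n).
assert (0 < / (INR n + 1)) by (apply Rinv_0_lt_compat; lra). lra.
Qed.

Lemma RInt_Chasles_R (f : R -> R) p r q : ex_RInt f p r -> ex_RInt f r q ->
  RInt f p q = RInt f p r + RInt f r q.
Proof. intros H1 H2. symmetry. now apply (@RInt_Chasles R_CompleteNormedModule). Qed.

Lemma RInt_scal_minus (f g : R -> R) c p q : ex_RInt f p q -> ex_RInt g p q ->
  RInt (fun x => c * f x - c * g x) p q = c * RInt f p q - c * RInt g p q.
Proof.
intros Hf Hg.
apply (@is_RInt_unique R_CompleteNormedModule), (is_RInt_minus (fun x => c * f x)).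
- apply (is_RInt_scal f p q c), (@RInt_correct R_CompleteNormedModule), Hf.
- apply (is_RInt_scal g p q c), (@RInt_correct R_CompleteNormedModule), Hg.
Qed.

(* [asin] on [[-1, 1]] by the half-angle formula, in a form that is visibly continuous on all of [R]. *)
Definition arcsin (y : R) : R := 2 * atan (y / (1 + sqrt (1 - y ^ 2))).

Lemma is_derive_arcsin y : -1 < y < 1 -> is_derive arcsin y (/ sqrt (1 - y ^ 2)).
Proof.
intros Hy. unfold arcsin. auto_derive.
- pose proof (sqrt_pos (1 + - (y * (y * 1)))). repeat split; [nra|lra].
- replace (1 + - (y * (y * 1))) with (1 - y ^ 2) by ring.
  assert (H1 : 0 < 1 - y ^ 2) by nra.
  pose proof (sqrt_lt_R0 _ H1) as Hs.
  pose proof (sqrt_sqrt _ (Rlt_le _ _ H1)) as Hss.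
  set (s := sqrt (1 - y ^ 2)) in *.
  assert (Hy2 : y ^ 2 = 1 - s * s) by lra.
  field_simplify; [rewrite Hy2; field; nra | lra | repeat split; nra].
Qed.

Lemma continuous_arcsin y : continuous arcsin y.
Proof.
unfold arcsin. apply @continuous_mult; [apply continuous_const|].
apply continuous_atan_comp, @continuous_mult; [apply continuous_id|].
apply continuous_Rinv_comp.
- apply @continuous_plus; [apply continuous_const|].
  apply continuous_sqrt_comp, ex_derive_continuous_R. auto_derive. auto.
- pose proof (sqrt_pos (1 - y ^ 2)). lra.
Qed.

Lemma arcsin_1 : arcsin 1 = PI / 2.
Proof.
unfold arcsin. replace (1 - 1 ^ 2) with 0 by ring.
rewrite sqrt_0, Rplus_0_r, Rdiv_1_r, atan_1. field.
Qed.

Lemma arcsin_m1 : arcsin (-1) = - (PI / 2).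
Proof.
unfold arcsin. replace (1 - (-1) ^ 2) with 0 by ring.
rewrite sqrt_0. replace (-1 / (1 + 0)) with (- (1)) by field.
rewrite atan_opp, atan_1. field.
Qed.

Lemma arcsin_0 : arcsin 0 = 0.
Proof. unfold arcsin. rewrite Rdiv_0_l, atan_0. ring. Qed.

Lemma Derive_arcsin y : -1 < y < 1 -> Derive arcsin y = / sqrt (1 - y ^ 2).
Proof. intros Hy. now apply is_derive_unique, is_derive_arcsin. Qed.

Lemma sqrt_1_minus_div_sq r y : 0 < r -> y ^ 2 <= r ^ 2 ->
  sqrt (1 - (y / r) ^ 2) = sqrt (r ^ 2 - y ^ 2) / r.
Proof.
intros Hr Hy. replace (1 - (y / r) ^ 2) with ((r ^ 2 - y ^ 2) / r ^ 2) by (field; lra).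
rewrite sqrt_div_alt, sqrt_pow2 by nra. reflexivity.
Qed.

Definition circle_primitive (r c x : R) : R :=
  ((x - c) * sqrt (r ^ 2 - (x - c) ^ 2) + r ^ 2 * arcsin ((x - c) / r)) / 2.

Lemma is_derive_circle_primitive r c x : 0 < r -> c - r < x < c + r ->
  is_derive (circle_primitive r c) x (sqrt (r ^ 2 - (x - c) ^ 2)).
Proof.
intros Hr Hx.
assert (Hy : -1 < (x - c) / r < 1).
{ split; [apply Rlt_div_r | apply Rlt_div_l]; lra. }
assert (Hsq : 0 < r ^ 2 - (x - c) ^ 2) by nra.
unfold circle_primitive. auto_derive.
- split; [nra|]. split; [|exact I]. eexists. now apply is_derive_arcsin.
- replace ((x + - c) * / r) with ((x - c) / r) by reflexivity.
  rewrite Derive_arcsin, sqrt_1_minus_div_sq by (auto; lra).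
  replace (r * (r * 1) + - ((x + - c) * ((x + - c) * 1))) with (r ^ 2 - (x - c) ^ 2) by ring.
  pose proof (sqrt_lt_R0 _ Hsq) as Hs.
  pose proof (sqrt_sqrt _ (Rlt_le _ _ Hsq)) as Hss.
  set (s := sqrt (r ^ 2 - (x - c) ^ 2)) in *.
  replace (x + - c) with (x - c) by reflexivity.
  replace (r * (r * 1)) with (s * s + (x - c) ^ 2) by (rewrite Hss; ring).
  field. lra.
Qed.

Lemma continuous_circle_primitive r c x : continuous (circle_primitive r c) x.
Proof.
unfold circle_primitive. apply @continuous_mult; [|apply continuous_const].
apply @continuous_plus; apply @continuous_mult.
- apply ex_derive_continuous_R. auto_derive. auto.
- apply continuous_sqrt_comp, ex_derive_continuous_R. auto_derive. auto.
- apply continuous_const.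
- apply (continuous_comp (fun x => (x - c) / r) arcsin); [|apply continuous_arcsin].
  apply ex_derive_continuous_R. auto_derive. auto.
Qed.

Lemma RInt_circle r c p q : 0 < r -> c - r <= p <= q -> q <= c + r ->
  RInt (fun x => sqrt (r ^ 2 - (x - c) ^ 2)) p q
  = circle_primitive r c q - circle_primitive r c p.
Proof.
intros Hr Hp Hq. apply RInt_derive_interior; try apply continuous_circle_primitive; [lra| |].
- intros x _. apply continuous_sqrt_comp, ex_derive_continuous_R. auto_derive. auto.
- intros x Hx. apply is_derive_circle_primitive; lra.
Qed.

Lemma RInt_semicircle r c : 0 < r ->
  RInt (fun x => sqrt (r ^ 2 - (x - c) ^ 2)) (c - r) (c + r) = PI * r ^ 2 / 2.
Proof.
intros Hr. rewrite RInt_circle by lra. unfold circle_primitive.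
replace ((c + r - c) / r) with 1 by (field; lra).
replace ((c - r - c) / r) with (-1) by (field; lra).
replace (r ^ 2 - (c + r - c) ^ 2) with 0 by ring.
replace (r ^ 2 - (c - r - c) ^ 2) with 0 by ring.
rewrite arcsin_1, arcsin_m1, sqrt_0. change_eq_R. field.
Qed.

Lemma RInt_zero_on (f : R -> R) p q : p <= q ->
  (forall x, p < x < q -> f x = 0) -> RInt f p q = 0.
Proof.
intros Hpq Hf. rewrite (RInt_ext f (fun _ => 0)).
- rewrite RInt_const. apply Rmult_0_r.
- rewrite Rmin_left, Rmax_right by lra. exact Hf.
Qed.

Lemma RInt_quarter_circle r q : 0 < r <= q ->
  RInt (fun x => sqrt (r ^ 2 - x ^ 2)) 0 q = PI * r ^ 2 / 4.
Proof.
intros Hr.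
assert (Hcont : forall s t, ex_RInt (fun x => sqrt (r ^ 2 - x ^ 2)) s t).
{ intros s t. apply (@ex_RInt_continuous R_CompleteNormedModule). intros x _.
  apply continuous_sqrt_comp, ex_derive_continuous_R. auto_derive. auto. }
rewrite (RInt_Chasles_R _ 0 r q) by apply Hcont.
rewrite (RInt_zero_on _ r q), Rplus_0_r; [|lra|].
- rewrite (RInt_ext _ (fun x => sqrt (r ^ 2 - (x - 0) ^ 2)))
    by (intros; now rewrite Rminus_0_r).
  rewrite RInt_circle by lra. unfold circle_primitive.
  replace ((r - 0) / r) with 1 by (field; lra).
  replace (r ^ 2 - (r - 0) ^ 2) with 0 by ring.
  rewrite !Rminus_0_r, Rdiv_0_l, arcsin_1, arcsin_0, sqrt_0. change_eq_R. field.
- intros x Hx. apply sqrt_neg_0. nra.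
Qed.

Section PVPrimitive.

Variables al be : R.
Hypotheses (Hal : al < 1) (Hbe : 1 < be).

Definition root_quad (u : R) : R := sqrt ((be - u) * (u - al)).

Definition log_arg (u : R) : R :=
  (be - u) * (1 - al) + (u - al) * (be - 1) + 2 * root_quad 1 * root_quad u.

(* The classical primitive of [root_quad u / (u - 1)] minus [root_quad 1 * ln |u - 1|], i.e. a
   primitive of [(root_quad u - root_quad 1) / (u - 1)] that is regular across [u = 1]. *)
Definition pv_primitive (u : R) : R :=
  root_quad u + ((al + be) / 2 - 1) * arcsin ((u - (al + be) / 2) / ((be - al) / 2))
  - root_quad 1 * ln (log_arg u).

Lemma root_quad_sq u : al <= u <= be -> root_quad u * root_quad u = (be - u) * (u - al).
Proof. intros Hu. apply sqrt_sqrt. nra. Qed.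

Lemma log_arg_pos u : al <= u <= be -> 0 < log_arg u.
Proof.
intros Hu. unfold log_arg.
assert (0 <= root_quad 1 * root_quad u) by (apply Rmult_le_pos; apply sqrt_pos).
destruct (Rle_lt_dec u 1); nra.
Qed.

Lemma is_derive_pv_primitive u : al < u < be -> u <> 1 ->
  is_derive pv_primitive u ((root_quad u - root_quad 1) / (u - 1)).
Proof.
intros Hu Hu1.
assert (Hg := log_arg_pos u ltac:(lra)).
assert (Hy : -1 < (u - (al + be) / 2) / ((be - al) / 2) < 1).
{ split; [apply Rlt_div_r | apply Rlt_div_l]; lra. }
unfold pv_primitive, log_arg, root_quad. auto_derive.
- repeat split; try nra; [|exact Hg]. eexists. now apply is_derive_arcsin.
- change ((u + - ((al + be) / 2)) * / ((be - al) / 2))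
    with ((u - (al + be) / 2) / ((be - al) / 2)).
  rewrite Derive_arcsin, sqrt_1_minus_div_sq by (auto; nra).
  replace (((be - al) / 2) ^ 2 - (u - (al + be) / 2) ^ 2) with ((be - u) * (u - al)) by field.
  change (be + - u) with (be - u) in *. change (u + - al) with (u - al) in *.
  assert (HW := root_quad_sq u ltac:(lra)). assert (Hd := root_quad_sq 1 ltac:(lra)).
  assert (HW0 : 0 < root_quad u) by (apply sqrt_lt_R0; nra).
  unfold log_arg, root_quad in *.
  set (W := sqrt ((be - u) * (u - al))) in *. set (d := sqrt ((be - 1) * (1 - al))) in *.
  field_simplify_eq; [|repeat split; lra].
  replace (W ^ 3) with (W * (W * W)) by ring.
  replace (W ^ 2) with (W * W) by ring. replace (d ^ 2) with (d * d) by ring.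
  rewrite HW, Hd. ring.
Qed.

Lemma continuous_pv_primitive u : al <= u <= be -> continuous pv_primitive u.
Proof.
intros Hu.
assert (HW : forall v, continuous root_quad v).
{ intros v. apply continuous_sqrt_comp, ex_derive_continuous_R. auto_derive. auto. }
unfold pv_primitive. apply @continuous_minus; [apply @continuous_plus|].
- apply HW.
- apply @continuous_mult; [apply continuous_const|].
  apply (continuous_comp (fun u => (u - (al + be) / 2) / ((be - al) / 2)) arcsin);
    [|apply continuous_arcsin].
  apply ex_derive_continuous_R. auto_derive. auto.
- apply @continuous_mult; [apply continuous_const|].
  apply (continuous_comp log_arg ln); [|apply continuous_ln, log_arg_pos; lra].
  unfold log_arg. apply @continuous_plus; [|apply @continuous_mult; [apply continuous_const|apply HW]].
  apply ex_derive_continuous_R. auto_derive. auto.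
Qed.

Lemma pv_primitive_endpoints :
  pv_primitive be - pv_primitive al
  = ((al + be) / 2 - 1) * PI - root_quad 1 * (ln (be - 1) - ln (1 - al)).
Proof.
unfold pv_primitive, log_arg, root_quad.
replace ((be - be) * (be - al)) with 0 by ring.
replace ((be - al) * (al - al)) with 0 by ring.
replace ((be - (al + be) / 2) / ((be - al) / 2)) with 1 by (field; lra).
replace ((al - (al + be) / 2) / ((be - al) / 2)) with (-1) by (field; lra).
rewrite sqrt_0, arcsin_1, arcsin_m1, !Rmult_0_r, !Rplus_0_r.
replace ((be - be) * (1 - al) + (be - al) * (be - 1)) with ((be - al) * (be - 1)) by ring.
replace ((be - al) * (1 - al) + (al - al) * (be - 1)) with ((be - al) * (1 - al)) by ring.
rewrite !ln_mult by lra. field.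
Qed.

End PVPrimitive.

Definition radicand (a b x : R) : R := (b ^ 2 - x ^ 2) * (x ^ 2 - a ^ 2).
Definition phi_singular (a b x : R) : R := x * sqrt (radicand a b x) / (x ^ 2 - 1).
Definition phi_regular (a b x : R) : R := sqrt (radicand a b x) / (1 + x).

Lemma phi_integrand_split a b x : x ^ 2 <> 1 ->
  phi_integrand a b x = PI * phi_singular a b x - PI * phi_regular a b x.
Proof.
intros Hx. assert (1 + x <> 0) by (intros E; apply Hx; replace x with (-1) by lra; ring).
unfold phi_integrand, phi_singular, phi_regular, radicand. field. split; [assumption|lra].
Qed.

Lemma continuous_sqrt_radicand a b x : continuous (fun x => sqrt (radicand a b x)) x.
Proof. apply continuous_sqrt_comp, ex_derive_continuous_R. unfold radicand. auto_derive. auto. Qed.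

Lemma continuous_phi_singular a b x : x ^ 2 <> 1 -> continuous (phi_singular a b) x.
Proof.
intros Hx. unfold phi_singular. apply @continuous_mult; [apply @continuous_mult|].
- apply continuous_id.
- apply continuous_sqrt_radicand.
- apply continuous_Rinv_comp; [|lra]. apply ex_derive_continuous_R. auto_derive. auto.
Qed.

Lemma continuous_phi_regular a b x : -1 < x -> continuous (phi_regular a b) x.
Proof.
intros Hx. unfold phi_regular. apply @continuous_mult; [apply continuous_sqrt_radicand|].
apply continuous_Rinv_comp; [|lra]. apply ex_derive_continuous_R. auto_derive. auto.
Qed.

Lemma ex_RInt_phi_regular a b p q : 0 <= p -> 0 <= q -> ex_RInt (phi_regular a b) p q.
Proof.
intros Hp Hq. apply (@ex_RInt_continuous R_CompleteNormedModule). intros x Hx.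
apply continuous_phi_regular. pose proof (Rmin_glb _ _ _ Hp Hq). lra.
Qed.

(* [s = -1] on [(a, 1)] and [s = 1] on [(1, b)] select the branch of [ln |x^2 - 1|]. *)
Definition singular_primitive (a b s x : R) : R :=
  (pv_primitive (a ^ 2) (b ^ 2) (x ^ 2) + root_quad (a ^ 2) (b ^ 2) 1 * ln (s * (x ^ 2 - 1))) / 2.

Lemma is_derive_singular_primitive a b s x : 0 <= a < 1 -> 1 < b -> a < x < b ->
  0 < s * (x ^ 2 - 1) -> is_derive (singular_primitive a b s) x (phi_singular a b x).
Proof.
intros Ha Hb Hx Hs.
assert (Hx2 : a ^ 2 < x ^ 2 < b ^ 2) by nra.
assert (Hx1 : x ^ 2 - 1 <> 0) by (intros E; rewrite E in Hs; lra).
assert (HF := is_derive_pv_primitive (a ^ 2) (b ^ 2) ltac:(nra) ltac:(nra) (x ^ 2) Hx2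
                ltac:(lra)).
unfold singular_primitive. auto_derive;
  change (a * (a * 1)) with (a ^ 2); change (b * (b * 1)) with (b ^ 2);
  change (x * (x * 1)) with (x ^ 2).
- split; [eexists; exact HF | split; [exact Hs | exact I]].
- replace (Derive _ (x ^ 2)) with ((root_quad (a ^ 2) (b ^ 2) (x ^ 2) - root_quad (a ^ 2) (b ^ 2) 1) / (x ^ 2 - 1))
    by (symmetry; now apply is_derive_unique).
  unfold phi_singular, root_quad, radicand. field.
  split; [assumption | intros E; rewrite E, Rmult_0_l in Hs; lra].
Qed.

Lemma continuous_singular_primitive a b s x : 0 <= a < 1 -> 1 < b -> a <= x <= b ->
  0 < s * (x ^ 2 - 1) -> continuous (singular_primitive a b s) x.
Proof.
intros Ha Hb Hx Hs. unfold singular_primitive.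
apply @continuous_mult; [apply @continuous_plus|apply continuous_const].
- apply (continuous_comp (fun x => x ^ 2) (pv_primitive (a ^ 2) (b ^ 2))).
  + apply ex_derive_continuous_R. auto_derive. auto.
  + apply continuous_pv_primitive; nra.
- apply @continuous_mult; [apply continuous_const|].
  apply (continuous_comp (fun x => s * (x ^ 2 - 1)) ln); [|now apply continuous_ln].
  apply ex_derive_continuous_R. auto_derive. auto.
Qed.

Lemma RInt_phi_singular a b s p q : 0 <= a < 1 -> 1 < b -> a <= p <= q -> q <= b ->
  (forall x, p <= x <= q -> 0 < s * (x ^ 2 - 1)) ->
  RInt (phi_singular a b) p q = singular_primitive a b s q - singular_primitive a b s p.
Proof.
intros Ha Hb Hp Hq Hs.
assert (Hx1 : forall x, p <= x <= q -> x ^ 2 <> 1).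
{ intros x Hx E. specialize (Hs x Hx). rewrite E, Rminus_diag, Rmult_0_r in Hs. lra. }
apply RInt_derive_interior; [lra| | | |].
- intros x Hx. now apply continuous_phi_singular, Hx1.
- intros x Hx. apply is_derive_singular_primitive; auto; [lra|]. apply Hs. lra.
- apply continuous_singular_primitive; auto; [lra|]. apply Hs. lra.
- apply continuous_singular_primitive; auto; [lra|]. apply Hs. lra.
Qed.

Lemma singular_primitive_endpoints a b : 0 <= a < 1 -> 1 < b ->
  singular_primitive a b 1 b - singular_primitive a b (-1) a = PI / 4 * (a ^ 2 + b ^ 2 - 2).
Proof.
intros Ha Hb. unfold singular_primitive.
replace (1 * (b ^ 2 - 1)) with (b ^ 2 - 1) by ring.
replace (-1 * (a ^ 2 - 1)) with (1 - a ^ 2) by ring.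
pose proof (pv_primitive_endpoints (a ^ 2) (b ^ 2) ltac:(nra) ltac:(nra)). lra.
Qed.

Definition singular_gap (a b e : R) : R :=
  (pv_primitive (a ^ 2) (b ^ 2) ((1 - e) ^ 2) - pv_primitive (a ^ 2) (b ^ 2) ((1 + e) ^ 2)
   + root_quad (a ^ 2) (b ^ 2) 1 * (ln (2 - e) - ln (2 + e))) / 2.

Lemma singular_gap_eq a b e : 0 < e < 1 ->
  singular_primitive a b (-1) (1 - e) - singular_primitive a b 1 (1 + e) = singular_gap a b e.
Proof.
intros He. unfold singular_primitive, singular_gap.
replace (-1 * ((1 - e) ^ 2 - 1)) with (e * (2 - e)) by ring.
replace (1 * ((1 + e) ^ 2 - 1)) with (e * (2 + e)) by ring.
rewrite !ln_mult by lra. field.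
Qed.

Lemma singular_gap_0 a b : singular_gap a b 0 = 0.
Proof.
unfold singular_gap. rewrite !Rminus_0_r, !Rplus_0_r. field.
Qed.

Lemma continuous_singular_gap a b : 0 <= a < 1 -> 1 < b -> continuous (singular_gap a b) 0.
Proof.
intros Ha Hb. unfold singular_gap.
apply @continuous_mult; [apply @continuous_plus; [apply @continuous_minus|]|apply continuous_const].
- apply (continuous_comp (fun e => (1 - e) ^ 2) (pv_primitive (a ^ 2) (b ^ 2))).
  + apply ex_derive_continuous_R. auto_derive. auto.
  + apply continuous_pv_primitive; nra.
- apply (continuous_comp (fun e => (1 + e) ^ 2) (pv_primitive (a ^ 2) (b ^ 2))).
  + apply ex_derive_continuous_R. auto_derive. auto.
  + apply continuous_pv_primitive; nra.
- apply @continuous_mult; [apply continuous_const|].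
  apply ex_derive_continuous_R. auto_derive. lra.
Qed.

Definition regular_integral (a b : R) : R := RInt (phi_regular a b) a b.

Definition Phi_closed (a b : R) : R :=
  PI ^ 2 / 4 * (a ^ 2 + b ^ 2 - 2) - PI * regular_integral a b.

(* [pv_trunc] with the singular part integrated: it agrees with [pv_trunc] for small [e > 0]
   and, unlike it, is continuous at [e = 0]. *)
Definition pv_trunc_ext (a b e : R) : R :=
  PI * (PI / 4 * (a ^ 2 + b ^ 2 - 2) + singular_gap a b e)
  - PI * (RInt (phi_regular a b) a (1 - e) + RInt (phi_regular a b) (1 + e) b).

Lemma RInt_phi_integrand a b p q s : 0 <= a < 1 -> 1 < b -> a <= p <= q -> q <= b ->
  (forall x, p <= x <= q -> 0 < s * (x ^ 2 - 1)) ->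
  RInt (phi_integrand a b) p q
  = PI * (singular_primitive a b s q - singular_primitive a b s p)
    - PI * RInt (phi_regular a b) p q.
Proof.
intros Ha Hb Hp Hq Hs.
assert (Hx1 : forall x, p <= x <= q -> x ^ 2 <> 1).
{ intros x Hx E. specialize (Hs x Hx). rewrite E, Rminus_diag, Rmult_0_r in Hs. lra. }
assert (Hsing : ex_RInt (phi_singular a b) p q).
{ apply (@ex_RInt_continuous R_CompleteNormedModule). rewrite Rmin_left, Rmax_right by lra.
  intros x Hx. now apply continuous_phi_singular, Hx1. }
rewrite (RInt_ext _ (fun x => PI * phi_singular a b x - PI * phi_regular a b x)).
- rewrite RInt_scal_minus; [|exact Hsing|apply ex_RInt_phi_regular; lra].
  now rewrite (RInt_phi_singular a b s).
- rewrite Rmin_left, Rmax_right by lra. intros x Hx.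
  apply phi_integrand_split, Hx1. lra.
Qed.

Lemma pv_trunc_eq_ext a b e : 0 <= a < 1 -> 1 < b -> 0 < e -> e < 1 - a -> e < b - 1 ->
  pv_trunc a b e = pv_trunc_ext a b e.
Proof.
intros Ha Hb He Hea Heb. unfold pv_trunc, pv_trunc_ext.
rewrite (RInt_phi_integrand a b a (1 - e) (-1)); [|auto|auto|lra|lra|intros x Hx; nra].
rewrite (RInt_phi_integrand a b (1 + e) b 1); [|auto|auto|lra|lra|intros x Hx; nra].
rewrite <- singular_gap_eq, <- singular_primitive_endpoints; [ring|auto|auto|lra].
Qed.

Lemma continuous_RInt_phi_regular_upper a b p q : 0 <= p -> 0 < q ->
  continuous (fun y => RInt (phi_regular a b) p y) q.
Proof.
intros Hp Hq. apply (continuous_RInt_1 (phi_regular a b) p q).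
apply (filter_imp (fun z => 0 < z)); [|now apply (open_gt 0)].
intros z Hz. apply (@RInt_correct R_CompleteNormedModule), ex_RInt_phi_regular; lra.
Qed.

Lemma continuous_RInt_phi_regular_lower a b p q : 0 < p -> 0 <= q ->
  continuous (fun y => RInt (phi_regular a b) y q) p.
Proof.
intros Hp Hq. apply (continuous_RInt_2 (phi_regular a b) p q).
apply (filter_imp (fun z => 0 < z)); [|now apply (open_gt 0)].
intros z Hz. apply (@RInt_correct R_CompleteNormedModule), ex_RInt_phi_regular; lra.
Qed.

Lemma continuous_pv_trunc_ext a b : 0 <= a < 1 -> 1 < b -> continuous (pv_trunc_ext a b) 0.
Proof.
intros Ha Hb. unfold pv_trunc_ext.
apply @continuous_minus; apply @continuous_mult; try apply continuous_const.
- apply @continuous_plus; [apply continuous_const|]. now apply continuous_singular_gap.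
- apply @continuous_plus.
  + apply (continuous_comp (fun e => 1 - e) (fun y => RInt (phi_regular a b) a y)).
    * apply ex_derive_continuous_R. auto_derive. auto.
    * apply continuous_RInt_phi_regular_upper; lra.
  + apply (continuous_comp (fun e => 1 + e) (fun y => RInt (phi_regular a b) y b)).
    * apply ex_derive_continuous_R. auto_derive. auto.
    * apply continuous_RInt_phi_regular_lower; lra.
Qed.

Lemma pv_trunc_ext_0 a b : 0 <= a < 1 -> 1 < b -> pv_trunc_ext a b 0 = Phi_closed a b.
Proof.
intros Ha Hb. unfold pv_trunc_ext, Phi_closed, regular_integral.
rewrite singular_gap_0, Rminus_0_r, !Rplus_0_r.
rewrite (RInt_Chasles_R _ a 1 b) by (apply ex_RInt_phi_regular; lra).
change_eq_R. field.
Qed.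

Lemma pv_converges_Phi_closed a b : 0 <= a < 1 -> 1 < b -> pv_converges a b (Phi_closed a b).
Proof.
intros Ha Hb. unfold pv_converges. rewrite <- pv_trunc_ext_0 by assumption.
apply (filterlim_ext_loc (pv_trunc_ext a b)).
- assert (Hd : 0 < Rmin (1 - a) (b - 1)) by (apply Rmin_pos; lra).
  exists (mkposreal _ Hd). intros e He He0. simpl in He.
  change (Rabs (e - 0) < Rmin (1 - a) (b - 1)) in He.
  rewrite Rminus_0_r, Rabs_right in He by lra.
  symmetry. apply pv_trunc_eq_ext; try lra.
  + apply Rlt_le_trans with (1 := He), Rmin_l.
  + apply Rlt_le_trans with (1 := He), Rmin_r.
- apply (filterlim_filter_le_1 (F := locally 0)), continuous_pv_trunc_ext; auto.
  apply filter_le_within.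
Qed.

Lemma Phi_eq_Phi_closed a b : 0 <= a < 1 -> 1 < b -> Phi a b = Phi_closed a b.
Proof. intros Ha Hb. apply Lim_at_right, pv_converges_Phi_closed; assumption. Qed.

Lemma phi_regular_outside a b x : 0 <= a <= b -> 0 <= x -> x <= a \/ b <= x ->
  phi_regular a b x = 0.
Proof.
intros Hab Hx Hout. unfold phi_regular, radicand.
rewrite sqrt_neg_0; [apply Rdiv_0_l|].
destruct Hout as [H|H].
- assert (0 <= b ^ 2 - x ^ 2) by nra. assert (x ^ 2 - a ^ 2 <= 0) by nra. nra.
- assert (b ^ 2 - x ^ 2 <= 0) by nra. assert (0 <= x ^ 2 - a ^ 2) by nra. nra.
Qed.

Lemma regular_integral_on a b q : 0 <= a <= b -> b <= q ->
  regular_integral a b = RInt (phi_regular a b) 0 q.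
Proof.
intros Hab Hq. unfold regular_integral.
assert (Hex : forall p r, 0 <= p -> 0 <= r -> ex_RInt (phi_regular a b) p r)
  by apply ex_RInt_phi_regular.
rewrite (RInt_Chasles_R _ 0 a q), (RInt_Chasles_R _ a b q) by (apply Hex; lra).
rewrite (RInt_zero_on _ 0 a), (RInt_zero_on _ b q); try lra;
  intros x Hx; apply phi_regular_outside; lra.
Qed.

Lemma regular_integral_pos a b : 0 <= a < 1 -> 1 < b -> 0 < regular_integral a b.
Proof.
intros Ha Hb. unfold regular_integral. apply RInt_gt_0; [lra| |].
- intros x Hx. apply Rdiv_lt_0_compat; [|lra].
  apply sqrt_lt_R0. unfold radicand.
  apply Rmult_lt_0_compat; [|assert (0 < x - a) by lra]; nra.
- intros x Hx. apply continuous_phi_regular. lra.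
Qed.

Lemma phi_regular_factor a b x : 0 <= a <= b ->
  phi_regular a b x = sqrt (b ^ 2 - x ^ 2) * (sqrt (x ^ 2 - a ^ 2) / (1 + x)).
Proof.
intros Hab. unfold phi_regular, radicand, Rdiv. rewrite <- Rmult_assoc. f_equal.
destruct (Rle_lt_dec 0 (b ^ 2 - x ^ 2)) as [H|H].
- now apply sqrt_mult_alt.
- rewrite Rmult_comm, sqrt_mult_alt by nra. apply Rmult_comm.
Qed.

Lemma regular_integral_antitone_L a1 a2 b : 0 <= a1 <= a2 -> a2 <= b ->
  regular_integral a2 b <= regular_integral a1 b.
Proof.
intros Ha Hb.
rewrite (regular_integral_on a1 b b), (regular_integral_on a2 b b) by lra.
apply RInt_le; [lra|apply ex_RInt_phi_regular; lra|apply ex_RInt_phi_regular; lra|].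
intros x Hx. rewrite !phi_regular_factor by lra.
apply Rmult_le_compat_l; [apply sqrt_pos|].
apply Rmult_le_compat_r; [apply Rlt_le, Rinv_0_lt_compat; lra|].
apply sqrt_le_1_alt. nra.
Qed.

Lemma phi_regular_increment a b1 b2 x : 0 <= a <= b1 -> b1 <= b2 -> 0 <= x <= b2 ->
  0 <= phi_regular a b2 x - phi_regular a b1 x
    <= b2 / (1 + b2) * (sqrt (b2 ^ 2 - x ^ 2) - sqrt (b1 ^ 2 - x ^ 2)).
Proof.
intros Ha Hb Hx. rewrite !phi_regular_factor by lra.
set (t := sqrt (x ^ 2 - a ^ 2) / (1 + x)).
assert (Ht : 0 <= t <= b2 / (1 + b2)).
{ split; [apply Rdiv_le_0_compat; [apply sqrt_pos|lra]|].
  apply Rle_trans with (x / (1 + x)).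
  - apply Rmult_le_compat_r; [apply Rlt_le, Rinv_0_lt_compat; lra|].
    apply Rle_trans with (sqrt (x ^ 2)); [apply sqrt_le_1_alt; nra|].
    rewrite sqrt_pow2; lra.
  - replace (b2 / (1 + b2)) with (x / (1 + x) + (b2 - x) / ((1 + x) * (1 + b2)))
      by (field; lra).
    assert (0 <= (b2 - x) / ((1 + x) * (1 + b2))) by (apply Rdiv_le_0_compat; nra).
    lra. }
assert (Hc : sqrt (b1 ^ 2 - x ^ 2) <= sqrt (b2 ^ 2 - x ^ 2)) by (apply sqrt_le_1_alt; nra).
split; nra.
Qed.

Lemma regular_integral_increment a b1 b2 : 0 <= a <= b1 -> 0 < b1 <= b2 ->
  0 <= regular_integral a b2 - regular_integral a b1
    <= b2 / (1 + b2) * (PI / 4 * (b2 ^ 2 - b1 ^ 2)).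
Proof.
intros Ha Hb.
rewrite (regular_integral_on a b1 b2), (regular_integral_on a b2 b2) by lra.
set (k := b2 / (1 + b2)).
assert (Hcirc : forall r s t, ex_RInt (fun x => sqrt (r ^ 2 - x ^ 2)) s t).
{ intros r s t. apply (@ex_RInt_continuous R_CompleteNormedModule). intros x _.
  apply continuous_sqrt_comp, ex_derive_continuous_R. auto_derive. auto. }
assert (Hreg : forall b, ex_RInt (phi_regular a b) 0 b2)
  by (intros b; apply ex_RInt_phi_regular; lra).
replace (RInt (phi_regular a b2) 0 b2 - RInt (phi_regular a b1) 0 b2)
  with (RInt (fun x => phi_regular a b2 x - phi_regular a b1 x) 0 b2)
  by (apply (@is_RInt_unique R_CompleteNormedModule), (is_RInt_minus (phi_regular a b2));
      apply (@RInt_correct R_CompleteNormedModule), Hreg).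
replace (k * (PI / 4 * (b2 ^ 2 - b1 ^ 2)))
  with (RInt (fun x => k * sqrt (b2 ^ 2 - x ^ 2) - k * sqrt (b1 ^ 2 - x ^ 2)) 0 b2)
  by (rewrite RInt_scal_minus, !RInt_quarter_circle by (auto; lra); change_eq_R; field).
assert (Hdiff : ex_RInt (fun x => phi_regular a b2 x - phi_regular a b1 x) 0 b2)
  by (apply (ex_RInt_minus (phi_regular a b2)); apply Hreg).
split.
- apply RInt_ge_0; [lra|exact Hdiff|]. intros x Hx. apply (phi_regular_increment a b1 b2 x); lra.
- apply RInt_le; [lra|exact Hdiff| |].
  + apply (ex_RInt_minus (fun x => k * sqrt (b2 ^ 2 - x ^ 2)) (fun x => k * sqrt (b1 ^ 2 - x ^ 2))).
    * exact (ex_RInt_scal _ 0 b2 k (Hcirc b2 0 b2)).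
    * exact (ex_RInt_scal _ 0 b2 k (Hcirc b1 0 b2)).
  + intros x Hx. unfold k. rewrite <- Rmult_minus_distr_l.
    apply (phi_regular_increment a b1 b2 x); lra.
Qed.

Lemma regular_integral_diag b : 1 < b <= 2 ->
  regular_integral (2 - b) b < PI / 2 * (b - 1) ^ 2.
Proof.
intros Hb. unfold regular_integral. set (r := b - 1).
replace (PI / 2 * r ^ 2) with (PI * r ^ 2 / 2) by field.
rewrite <- (RInt_semicircle r 1) by (unfold r; lra).
replace (1 - r) with (2 - b) by (unfold r; ring).
replace (1 + r) with b by (unfold r; ring).
apply RInt_lt; [lra| | |].
- intros x _. apply continuous_sqrt_comp, ex_derive_continuous_R. auto_derive. auto.
- intros x Hx. apply continuous_phi_regular. lra.
- intros x Hx. unfold phi_regular.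
  set (c := r ^ 2 - (x - 1) ^ 2).
  assert (Hc : 0 < c).
  { assert (0 < r - (x - 1)) by (unfold r; lra). assert (0 < r + (x - 1)) by (unfold r; lra).
    unfold c. nra. }
  (* On the diagonal the radicand factors through the semicircle of radius [b - 1] about [1]. *)
  assert (E : radicand (2 - b) b x = c * ((1 + x) ^ 2 - r ^ 2)) by (unfold radicand, c, r; ring).
  rewrite E, sqrt_mult_alt by lra.
  apply Rlt_div_l; [lra|]. apply Rmult_lt_compat_l; [now apply sqrt_lt_R0|].
  assert (0 < 1 + x - r) by (unfold r; lra). assert (0 < r) by (unfold r; lra).
  apply Rlt_le_trans with (sqrt ((1 + x) ^ 2)); [apply sqrt_lt_1_alt; split; nra|].
  rewrite sqrt_pow2; lra.
Qed.

Lemma Phi_closed_incr_L a1 a2 b : 0 <= a1 < a2 -> a2 <= b ->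
  Phi_closed a1 b < Phi_closed a2 b.
Proof.
intros Ha Hb. unfold Phi_closed.
pose proof (regular_integral_antitone_L a1 a2 b ltac:(lra) Hb).
pose proof PI_RGT_0.
assert (PI * regular_integral a2 b <= PI * regular_integral a1 b)
  by (apply Rmult_le_compat_l; lra).
assert (0 < PI ^ 2 / 4 * (a2 ^ 2 - a1 ^ 2)) by (apply Rmult_lt_0_compat; nra).
nra.
Qed.

Lemma Phi_closed_mono_L a1 a2 b : 0 <= a1 <= a2 -> a2 <= b ->
  Phi_closed a1 b <= Phi_closed a2 b.
Proof.
intros Ha Hb. unfold Phi_closed.
pose proof (regular_integral_antitone_L a1 a2 b Ha Hb).
pose proof PI_RGT_0.
assert (PI * regular_integral a2 b <= PI * regular_integral a1 b)
  by (apply Rmult_le_compat_l; lra).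
assert (0 <= PI ^ 2 / 4 * (a2 ^ 2 - a1 ^ 2)) by (apply Rmult_le_pos; nra).
nra.
Qed.

Lemma Phi_closed_incr_R a b1 b2 : 0 <= a <= b1 -> 0 < b1 < b2 ->
  0 < Phi_closed a b2 - Phi_closed a b1 <= PI ^ 2 / 4 * (b2 ^ 2 - b1 ^ 2).
Proof.
intros Ha Hb. unfold Phi_closed.
destruct (regular_integral_increment a b1 b2 Ha ltac:(lra)) as [H1 H2].
set (k := b2 / (1 + b2)) in H2.
assert (Hk : k < 1) by (apply Rlt_div_l; lra).
pose proof PI_RGT_0.
assert (0 < b2 ^ 2 - b1 ^ 2) by nra.
assert (PI * (regular_integral a b2 - regular_integral a b1)
        <= PI * (k * (PI / 4 * (b2 ^ 2 - b1 ^ 2)))) by (apply Rmult_le_compat_l; lra).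
assert (0 <= PI * (regular_integral a b2 - regular_integral a b1)) by (apply Rmult_le_pos; lra).
assert (0 < PI * PI / 4 * ((b2 ^ 2 - b1 ^ 2) * (1 - k)))
  by (apply Rmult_lt_0_compat; [apply Rdiv_lt_0_compat|]; nra).
split; nra.
Qed.

Lemma Phi_closed_diag_pos b : 1 < b <= 2 -> 0 < Phi_closed (2 - b) b.
Proof.
intros Hb. unfold Phi_closed. pose proof (regular_integral_diag b Hb). pose proof PI_RGT_0.
assert (PI * regular_integral (2 - b) b < PI * (PI / 2 * (b - 1) ^ 2))
  by (apply Rmult_lt_compat_l; lra).
replace (PI ^ 2 / 4 * ((2 - b) ^ 2 + b ^ 2 - 2)) with (PI * (PI / 2 * (b - 1) ^ 2)) by field.
lra.
Qed.

Lemma Phi_closed_neg a b : 0 <= a < 1 -> 1 < b -> a ^ 2 + b ^ 2 <= 2 -> Phi_closed a b < 0.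
Proof.
intros Ha Hb Hab. unfold Phi_closed. pose proof (regular_integral_pos a b Ha Hb).
pose proof PI_RGT_0.
assert (0 < PI * regular_integral a b) by (apply Rmult_lt_0_compat; lra).
assert (PI ^ 2 / 4 * (a ^ 2 + b ^ 2 - 2) <= 0) by (apply Rmult_le_0_l; nra).
lra.
Qed.

Lemma Phi_closed_root_bounds a b : 0 <= a < 1 -> 1 < b -> Phi_closed a b = 0 ->
  a + b < 2 /\ a ^ 2 + b ^ 2 > 2.
Proof.
intros Ha Hb H0. split.
- destruct (Rlt_le_dec (a + b) 2) as [|Hab]; [assumption|exfalso].
  destruct (Rle_lt_dec b 2) as [Hb2|Hb2].
  + pose proof (Phi_closed_diag_pos b ltac:(lra)).
    pose proof (Phi_closed_mono_L (2 - b) a b ltac:(lra) ltac:(lra)). lra.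
  + pose proof (Phi_closed_diag_pos 2 ltac:(lra)). replace (2 - 2) with 0 in * by ring.
    destruct (Phi_closed_incr_R 0 2 b ltac:(lra) ltac:(lra)).
    pose proof (Phi_closed_mono_L 0 a b ltac:(lra) ltac:(lra)). lra.
- destruct (Rlt_le_dec 2 (a ^ 2 + b ^ 2)) as [|Hab]; [assumption|].
  pose proof (Phi_closed_neg a b Ha Hb Hab). lra.
Qed.

Lemma Phi_closed_lipschitz_R a u v : 0 <= a <= 1 -> 1 <= u <= 2 -> 1 <= v <= 2 ->
  Rabs (Phi_closed a u - Phi_closed a v) <= PI ^ 2 * Rabs (u - v).
Proof.
intros Ha Hu Hv. pose proof PI_RGT_0.
destruct (Rtotal_order u v) as [Huv|[<-|Huv]].
- destruct (Phi_closed_incr_R a u v ltac:(lra) ltac:(lra)).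
  rewrite !Rabs_left by lra. nra.
- rewrite !Rminus_diag, Rabs_R0. lra.
- destruct (Phi_closed_incr_R a v u ltac:(lra) ltac:(lra)).
  rewrite !Rabs_right by lra. nra.
Qed.

Lemma Phi_closed_unique_root :
  exists Rc, (1 < Rc /\ Phi_closed 0 Rc = 0) /\
    forall R', 1 < R' -> Phi_closed 0 R' = 0 -> R' = Rc.
Proof.
assert (Hs2 : 1 < sqrt 2 < 2).
{ pose proof (sqrt_sqrt 2 ltac:(lra)). pose proof Rlt_sqrt2_0. split; nra. }
set (g x := Phi_closed 0 (clamp (sqrt 2) 2 x)).
assert (Hg : continuity g).
{ intros x. apply continuity_pt_filterlim, (lipschitz_continuous _ (PI ^ 2)).
  - pose proof PI_RGT_0. nra.
  - intros y z. pose proof (clamp_in (sqrt 2) 2 y). pose proof (clamp_in (sqrt 2) 2 z).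
    eapply Rle_trans; [apply Phi_closed_lipschitz_R; lra|].
    apply Rmult_le_compat_l; [apply pow2_ge_0|apply clamp_lipschitz]. }
assert (Hneg : g (sqrt 2) < 0).
{ unfold g. rewrite clamp_id by lra. apply Phi_closed_neg; try lra.
  rewrite pow2_sqrt; lra. }
assert (Hpos : 0 < g 2).
{ unfold g. rewrite clamp_id by lra. replace 0 with (2 - 2) at 2 by ring.
  apply Phi_closed_diag_pos. lra. }
destruct (IVT g (sqrt 2) 2 Hg ltac:(lra) Hneg Hpos) as [z [Hz Hz0]].
unfold g in Hz0. rewrite clamp_id in Hz0 by lra.
exists z. split; [split; [lra|exact Hz0]|].
intros R' HR' H0.
destruct (Rtotal_order R' z) as [Hlt|[Heq|Hgt]]; [exfalso| exact Heq |exfalso].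
- destruct (Phi_closed_incr_R 0 R' z ltac:(lra) ltac:(lra)). lra.
- destruct (Phi_closed_incr_R 0 z R' ltac:(lra) ltac:(lra)). lra.
Qed.

Theorem lemma4p10 :
  (* Phi is well defined: the principal value exists for 0 <= L < 1 < R *)
  (forall a b : R, 0 <= a < 1 -> 1 < b -> pv_converges a b (Phi a b)) /\
  (* (i) strictly increasing in L and in R *)
  (forall R0 L1 L2 : R, 1 < R0 -> 0 <= L1 -> L1 < L2 -> L2 < 1 ->
      Phi L1 R0 < Phi L2 R0) /\
  (forall L0 R1 R2 : R, 0 <= L0 < 1 -> 1 < R1 -> R1 < R2 ->
      Phi L0 R1 < Phi L0 R2) /\
  (* (ii) unique R_c > 1 with Phi(0, R_c) = 0 *)
  (exists Rc : R, (1 < Rc /\ Phi 0 Rc = 0) /\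
      forall R' : R, 1 < R' -> Phi 0 R' = 0 -> R' = Rc) /\
  (* (iii) *)
  (forall a b : R, 0 <= a < 1 -> 1 < b -> Phi a b = 0 ->
      a + b < 2 /\ a ^ 2 + b ^ 2 > 2).
Proof.
split; [|split; [|split; [|split]]].
- intros a b Ha Hb. rewrite Phi_eq_Phi_closed by assumption.
  now apply pv_converges_Phi_closed.
- intros R0 L1 L2 HR HL1 HL12 HL2. rewrite !Phi_eq_Phi_closed by lra.
  apply Phi_closed_incr_L; lra.
- intros L0 R1 R2 HL HR1 HR12. rewrite !Phi_eq_Phi_closed by lra.
  destruct (Phi_closed_incr_R L0 R1 R2); lra.
- destruct Phi_closed_unique_root as [Rc [[HRc HRc0] Huniq]].
  exists Rc. rewrite Phi_eq_Phi_closed by lra. split; [split; assumption|].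
  intros R' HR' H0. rewrite Phi_eq_Phi_closed in H0 by lra. now apply Huniq.
- intros a b Ha Hb H0. rewrite Phi_eq_Phi_closed in H0 by assumption.
  now apply Phi_closed_root_bounds.
Qed.
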